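(* Let $\Gamma$ be a countable group, $E$ a countable free $\Gamma$-set, $\Gamma\curvearrowright(X,\mu)$ a free standard $\Gamma$-space, and $P=(W_s)_{s\in S}$ a $\Gamma$-equivariant $\mu$-partition of $X\times E$ of finite type, with $S$ countable. Then \[\Phi^P\colon\mathbb{Z}[E^{*+1}]\to L^\infty_{fs}(X\times S^{*+1};\mathbb{Z}),\qquad (e_0,\dots,e_n)\mapsto\big((x,s_0,\dots,s_n)\mapsto\chi_{W_{(s_0,\dots,s_n)}}(x,e_0,\dots,e_n)\big)\] is a well-defined $\mathbb{Z}\Gamma$-chain map that extends the inclusion $\mathbb{Z}\hookrightarrow L^\infty(X;\mathbb{Z})$.
   Context: A standard $\Gamma$-space is a measure preserving action on a standard Borel probability space $(X,\mu)$. A $\Gamma$-equivariant $\mu$-partition of $X\times E$ is a family $(W_s)_{s\in S}$ of pairwise disjoint Borel subsets of $X\times E$ whose union is conull for $\mu\otimes$(counting measure), where $S$ carries a free $\Gamma$-action with $\gamma\cdot W_s=W_{\gamma s}$ (diagonal action on $X\times E$). It is of finite type if for each $e\in E$ only finitely many $s$ satisfy $W_s\cap(X\times\{e\})\neq\emptyset$. For $s=(s_0,\dots,s_n)\in S^{n+1}$, $W_{s}:=\{(x,e_0,\dots,e_n): (x,e_r)\in W_{s_r}\ \forall r\}$. $L^\infty_{fs}(X\times S^{n+1};\mathbb{Z})$ is the $\mathbb{Z}\Gamma$-module of (classes of) essentially bounded measurable $f\colon X\times S^{n+1}\to\mathbb{Z}$ supported in $X\times F$ for a finite $F\subset S^{n+1}$,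 with diagonal $\Gamma$-action, boundary $(\partial_nf)(x,s_0,\dots,s_{n-1})=\sum_{j=0}^n(-1)^j\sum_{t\in S}f(x,s_0,\dots,s_{j-1},t,s_j,\dots,s_{n-1})$, augmentation $\tilde\varepsilon_Sf=\sum_sf(\cdot,s)$. $\mathbb{Z}[E^{*+1}]$ has the simplicial boundary and augmentation $\varepsilon_E(e)=1$. Extending the inclusion $\iota$ of constants means $\tilde\varepsilon_S\circ\Phi^P_0=\iota\circ\varepsilon_E$. *)

From HB Require Import structures.
From mathcomp Require Import all_boot all_order all_algebra.
From mathcomp Require Import all_classical all_reals all_analysis.
Set Implicit Arguments. Unset Strict Implicit. Unset Printing Implicit Defensive.
Import Order.TTheory GRing.Theory Num.Theory.
Local Open Scope classical_set_scope.
Local Open Scope ring_scope.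

Definition is_group {G : Type} (mul : G -> G -> G) (one : G) (inv : G -> G) :=
  [/\ forall a b c, mul a (mul b c) = mul (mul a b) c,
      forall a, mul one a = a,
      forall a, mul a one = a,
      forall a, mul (inv a) a = one &
      forall a, mul a (inv a) = one].

Definition is_action {G T : Type} (mul : G -> G -> G) (one : G)
  (act : G -> T -> T) :=
  (forall t, act one t = t) /\ (forall g h t, act (mul g h) t = act g (act h t)).

Definition free_action {G T : Type} (one : G) (act : G -> T -> T) :=
  forall g t, act g t = t -> g = one.

(* Standard Borel space: Borel isomorphic to a Borel subset of the reals. *)
Definition standard_borel d (X : measurableType d) (R : realType) :=
  exists f : X -> R, [/\ measurable_fun setT f, injective f &
    forall A : set X, measurable A -> measurable (f @` A)].

Definition measure_preserving_action d (X : measurableType d) (R : realType)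
  (mu : probability X R) {G : Type} (act : G -> X -> X) :=
  forall g, measurable_fun setT (act g) /\
    forall A : set X, measurable A -> mu (act g @^-1` A) = mu A.

Definition ess_free_action d (X : measurableType d) (R : realType)
  (mu : probability X R) {G : Type} (one : G) (act : G -> X -> X) :=
  {ae mu, forall x, forall g, act g x = x -> g = one}.

(* Gamma-equivariant mu-partition of X x E of finite type, indexed by S.
   The sets W s are Borel in X x E (E countable, discrete). *)
Definition equiv_partition_finite_type d (X : measurableType d)
  (R : realType) (mu : probability X R) {G E S : Type} (inv : G -> G)
  (actX : G -> X -> X) (actE : G -> E -> E) (actS : G -> S -> S)
  (W : S -> set (X * E)) :=
  [/\ (forall s e, measurable [set x | W s (x, e)]),
      (forall s t, s <> t -> W s `&` W t = set0),
      (* the union is conull for mu (x) counting measure on X x E *)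
      (forall e, mu [set x | forall s, ~ W s (x, e)] = 0%E),
      (forall g s, (fun p => (actX g p.1, actE g p.2)) @` W s = W (actS g s)) &
      (forall e, finite_set [set s | exists x, W s (x, e)])].

Definition Phi {X E S : Type} (W : S -> set (X * E)) (e : seq E)
  (x : X) (s : seq S) : int :=
  if size s == size e then \prod_(p <- zip s e) \1_(W p.1) (x, p.2) else 0.

(* f is (a representative of) an element of L^oo_fs(X x S^{n+1}; Z):
   measurable in x (S discrete), bounded, supported in X x F, F finite
   subset of S^{n+1}. *)
Definition in_Linf_fs d (X : measurableType d) {S : eqType} (n : nat)
  (f : X -> seq S -> int) :=
  [/\ (forall s (k : int), measurable [set x | f x s = k]),
      (exists M : int, forall x s, `|f x s| <= M) &
      (exists F : seq (seq S), (forall s, s \in F -> size s = n.+1) /\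
         forall x s, s \notin F -> f x s = 0)].

Definition ins {S : Type} (j : nat) (t : S) (s : seq S) :=
  take j s ++ t :: drop j s.

Definition del {E : Type} (j : nat) (e : seq E) := take j e ++ drop j.+1 e.

(* boundary of L^oo_fs(X x S^{*+1}; Z), from degree n to degree n-1 *)
Definition bdry_fs {X : Type} {S : choiceType} (n : nat)
  (f : X -> seq S -> int) (x : X) (s : seq S) : int :=
  \sum_(j < n.+1) (-1) ^+ j * \sum_(t \in [set: S]) f x (ins j t s).

Definition aug_fs {X : Type} {S : choiceType} (f : X -> seq S -> int)
  (x : X) : int := \sum_(t \in [set: S]) f x [:: t].

Definition Phi_bdry {X E S : Type} (W : S -> set (X * E)) (e : seq E)
  (x : X) (s : seq S) : int :=
  \sum_(j < size e) (-1) ^+ j * Phi W (del j e) x s.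

From HB Require Import structures.
From mathcomp Require Import all_boot all_order all_algebra.
From mathcomp Require Import all_classical all_reals all_analysis.
Set Implicit Arguments.
Unset Strict Implicit.
Unset Printing Implicit Defensive.
Import Order.TTheory GRing.Theory Num.Theory.
Local Open Scope classical_set_scope.
Local Open Scope ring_scope.

(* For almost every x the sets W_s partition {x} x E:
   they are disjoint, and for each of the countably many e the x with (x, e) in
   no W_s form a null set.  At such an x, summing the j-th factor over s_j picks
   out the unique W_s containing (x, e_j) and leaves Phi^P of the j-th face,
   which gives both the chain-map identity and the augmentation.  The support
   of Phi^P(e) lies in the finite set of s with every W_{s_r} meeting
   X x {e_r} (finite type), and equivariance is g W_s = W_{g s}. *)

Section Phi_combinatorics.
Variables (X E S : Type) (W : S -> set (X * E)).

Lemma Phi_cons f e x t s :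
  Phi W (f :: e) x (t :: s) = \1_(W t) (x, f) * Phi W e x s.
Proof. by rewrite /Phi /= eqSS; case: ifP => _; rewrite ?big_cons ?mulr0. Qed.

Lemma Phi_nil x : Phi W [::] x [::] = 1.
Proof. by rewrite /Phi /= big_nil. Qed.

Lemma Phi_ins f0 j e x t s : (j < size e)%N ->
  Phi W e x (ins j t s) = \1_(W t) (x, nth f0 e j) * Phi W (del j e) x s.
Proof.
elim: j e s => [|j IH] [|f e] s //= => [_ | j_lt].
  by rewrite /ins /del /= take0 !drop0 Phi_cons.
case: s => [|u s]; last first.
  by rewrite /ins /del /= -/(ins j t s) -/(del j e) !Phi_cons IH // mulrCA.
by case: e j_lt => // f' e' _; rewrite /ins /del /= Phi_cons /Phi /= !mulr0.
Qed.

Definition cell (p : seq (S * E)) : set X :=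
  foldr (fun q A => [set x | W q.1 (x, q.2)] `&` A) setT p.

Lemma prod_indic_cell p x :
  \prod_(q <- p) \1_(W q.1) (x, q.2) = \1_(cell p) x :> int.
Proof.
elim: p => [|q p IH]; first by rewrite big_nil indicE mem_set.
by rewrite big_cons IH /= indicI.
Qed.

Lemma Phi_norm_le1 e x s : `|Phi W e x s| <= 1.
Proof.
rewrite /Phi; case: ifP => // _.
by rewrite prod_indic_cell indicE; case: (_ \in _).
Qed.

End Phi_combinatorics.

Section Phi_measurable.
Variables (d : measure_display) (X : measurableType d) (E S : Type).
Variable W : S -> set (X * E).
Hypothesis measurable_W : forall s e, measurable [set x | W s (x, e)].

Lemma measurable_cell p : measurable (cell W p).
Proof. by elim: p => [|q p IH]; [exact: measurableT | exact: measurableI]. Qed.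

Lemma measurable_Phi_eq e s (k : int) : measurable [set x | Phi W e x s = k].
Proof.
rewrite /Phi; case: (size s == size e).
  under eq_set => x do rewrite prod_indic_cell.
  rewrite (_ : [set x | _] = \1_(cell W (zip s e)) @^-1` [set k]) //.
  rewrite preimage_indic.
  have mcell := measurable_cell (zip s e).
  by repeat case: ifP => _; try exact: measurableC.
have [<-|k_ne0] := pselect (0 = k).
  by rewrite (_ : [set _ | _] = setT) //; apply/seteqP; split.
by rewrite (_ : [set _ | _] = set0) //; apply/seteqP; split.
Qed.

End Phi_measurable.

Definition tuples_in {E S : Type} (T : E -> seq S) (e : seq E) : seq (seq S) :=
  foldr (fun f acc => [seq t :: u | t <- T f, u <- acc]) [:: [::]] e.

Lemma size_tuples_in {E : Type} {S : eqType} (T : E -> seq S) e u :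
  u \in tuples_in T e -> size u = size e.
Proof.
elim: e u => [|f e IH] u /=; first by rewrite inE => /eqP ->.
by case/allpairsP => -[t v] [_ /= /IH <- ->].
Qed.

Lemma Phi_eq0_notin_tuples {X E : Type} {S : eqType} (W : S -> set (X * E))
    (T : E -> seq S) e x s :
  (forall t f y, W t (y, f) -> t \in T f) ->
  s \notin tuples_in T e -> Phi W e x s = 0.
Proof.
move=> WT; elim: e s => [|f e IH] [|t s] //= s_notin; rewrite Phi_cons.
have [Wt|Wt] := pselect (W t (x, f)); last by rewrite indicE memNset ?mul0r.
rewrite IH ?mulr0 //; apply: contra s_notin => s_in.
exact: (allpairs_f (fun t u => t :: u) (WT _ _ _ Wt) s_in).
Qed.

Lemma Phi_in_Linf_fs d (X : measurableType d) (E : Type) (S : choiceType)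
    (W : S -> set (X * E)) n e :
  (forall s f, measurable [set x | W s (x, f)]) ->
  (forall f, finite_set [set s | exists x, W s (x, f)]) ->
  size e = n.+1 -> in_Linf_fs n (Phi W e).
Proof.
move=> measurable_W finite_W size_e; split.
- by move=> s k; exact: measurable_Phi_eq.
- by exists 1 => x s; exact: Phi_norm_le1.
pose T f := finmap.enum_fset (fset_set [set s | exists x, W s (x, f)]).
exists (tuples_in T e); split; first by move=> s /size_tuples_in ->.
move=> x s; apply: Phi_eq0_notin_tuples => t f y Wt.
by rewrite in_fset_set //; apply: mem_set; exists y.
Qed.

Section Phi_equivariant.
Variables (G X E S : Type) (mul : G -> G -> G) (one : G) (inv : G -> G).
Variables (actX : G -> X -> X) (actE : G -> E -> E) (actS : G -> S -> S).
Variable W : S -> set (X * E).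
Hypothesis G_group : is_group mul one inv.
Hypothesis actX_action : is_action mul one actX.
Hypothesis actE_action : is_action mul one actE.
Hypothesis W_equivariant :
  forall g s, (fun p => (actX g p.1, actE g p.2)) @` W s = W (actS g s).

Lemma W_act g t x f :
  W t (x, actE g f) <-> W (actS (inv g) t) (actX (inv g) x, f).
Proof.
have [_ _ _ mulVg mulgV] := G_group.
have [actX1 actXM] := actX_action; have [actE1 actEM] := actE_action.
rewrite -W_equivariant; split => [Wt | [[y f'] Wy [actX_y actE_f']]].
  by exists (x, actE g f) => //=; rewrite -actEM mulVg actE1.
have -> : x = y.
  by rewrite -[x]actX1 -(mulgV g) actXM -actX_y -actXM mulgV actX1.
by rewrite -actE_f' -actEM mulgV actE1.
Qed.

Lemma Phi_act g e s x :
  Phi W (map (actE g) e) x s = Phi W e (actX (inv g) x) (map (actS (inv g)) s).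
Proof.
elim: e s => [|f e IH] [|t s]; rewrite /= ?Phi_nil //.
rewrite !Phi_cons IH !indicE; congr (_%:R * _).
have [Wt|Wt] := pselect (W t (x, actE g f)).
  by rewrite !mem_set //; exact/W_act.
by rewrite !memNset // => /W_act.
Qed.

End Phi_equivariant.

Lemma fsbig_indic_disjoint (U : Type) (S : choiceType) (R : pzRingType)
    (W : S -> set U) (u : U) (s0 : S) (F : S -> R) :
  (forall s t, s <> t -> W s `&` W t = set0) -> W s0 u ->
  \sum_(t \in [set: S]) \1_(W t) u * F t = F s0.
Proof.
move=> W_disj Ws0; rewrite -(@fsbig_widen _ _ _ _ [set s0]) //.
  by rewrite fsbig_set1 indicE mem_set // mul1r.
move=> t [_ /= t_neq]; rewrite indicE memNset ?mul0r // => Wt.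
by have : (W t `&` W s0) u by []; rewrite W_disj.
Qed.

Section Phi_chain_map.
Variables (X E : Type) (S : choiceType) (W : S -> set (X * E)).
Hypothesis W_disj : forall s t, s <> t -> W s `&` W t = set0.

Definition covers (x : X) := forall f : E, exists s, W s (x, f).

Lemma bdry_Phi x n e s : covers x -> size e = n.+2 ->
  bdry_fs n.+1 (Phi W e) x s = Phi_bdry W e x s.
Proof.
case: e => [//|f0 e'] covx size_e; rewrite /bdry_fs /Phi_bdry size_e.
apply: eq_bigr => j _; congr (_ * _).
have [s0 Ws0] := covx (nth f0 (f0 :: e') j).
under eq_fsbigr => t _ do rewrite (Phi_ins W f0) ?size_e //.
exact: (fsbig_indic_disjoint (fun=> _) W_disj Ws0).
Qed.

Lemma aug_Phi x f : covers x -> aug_fs (Phi W [:: f]) x = 1.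
Proof.
move=> covx; have [s0 Ws0] := covx f.
rewrite /aug_fs; under eq_fsbigr => t _ do rewrite Phi_cons Phi_nil.
exact: (fsbig_indic_disjoint (fun=> 1) W_disj Ws0).
Qed.

End Phi_chain_map.

Lemma ae_forall_count d (T : measurableType d) (R : realType)
    (mu : {measure set T -> \bar R}) (I : countType) (P : I -> T -> Prop) :
  (forall i, {ae mu, forall x, P i x}) -> {ae mu, forall x, forall i, P i x}.
Proof.
move=> aeP.
have aeQ n : {ae mu, forall x, if unpickle n is Some i then P i x else True}.
  by case: (unpickle n) => [i|]; [exact: aeP | exact: aeW].
apply: filterS (ae_foralln aeQ) => x Qx i.
by have := Qx (pickle i); rewrite pickleK.
Qed.

Lemma ae_covers d (X : measurableType d) (R : realType)
    (mu : {measure set X -> \bar R}) (E S : countType) (W : S -> set (X * E)) :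
  (forall s f, measurable [set x | W s (x, f)]) ->
  (forall f, mu [set x | forall s, ~ W s (x, f)] = 0%E) ->
  {ae mu, forall x, covers W x}.
Proof.
move=> measurable_W uncovered0; apply: ae_forall_count => f.
exists [set x | forall s, ~ W s (x, f)]; split => //; last first.
  by move=> x /= not_cov s Ws; apply: not_cov; exists s.
rewrite (_ : [set x | _] = ~` \bigcup_s [set x | W s (x, f)]).
  by apply/measurableC/countable_bigcupT_measurable => //; exact: countableP.
apply/seteqP; split => x /= Nx; first by case=> s _ /Nx.
by move=> s Ws; apply: Nx; exists s.
Qed.

Theorem proposition4p5
  (G : countType) (mul : G -> G -> G) (one : G) (inv : G -> G)
  (E S : countType) (d : measure_display) (X : measurableType d)
  (R : realType) (mu : probability X R)
  (actX : G -> X -> X) (actE : G -> E -> E) (actS : G -> S -> S)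
  (W : S -> set (X * E)) :
  is_group mul one inv ->
  is_action mul one actE -> free_action one actE ->
  standard_borel X R ->
  is_action mul one actX -> measure_preserving_action mu actX ->
  ess_free_action mu one actX ->
  is_action mul one actS -> free_action one actS ->
  equiv_partition_finite_type mu inv actX actE actS W ->
  (* well-defined: Phi^P(e) lies in L^oo_fs(X x S^{n+1}; Z) *)
  [/\ (forall (n : nat) (e : seq E), size e = n.+1 -> in_Linf_fs n (Phi W e)),
      (* Z Gamma-equivariance (diagonal actions) *)
      (forall (g : G) (e : seq E) (s : seq S),
         {ae mu, forall x, Phi W (map (actE g) e) x s =
                           Phi W e (actX (inv g) x) (map (actS (inv g)) s)}),
      (* chain map: d_{n+1} o Phi_{n+1} = Phi_n o d_{n+1} *)
      (forall (n : nat) (e : seq E) (s : seq S), size e = n.+2 ->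
         {ae mu, forall x, bdry_fs n.+1 (Phi W e) x s = Phi_bdry W e x s}) &
      (* extends the inclusion Z -> L^oo(X; Z) *)
      (forall e : E, {ae mu, forall x, aug_fs (Phi W [:: e]) x = 1})].
Proof.
move=> G_group actE_action _ _ actX_action _ _ _ _.
case=> measurable_W W_disj uncovered0 W_equivariant finite_W.
have ae_cov := ae_covers measurable_W uncovered0.
split.
- by move=> n e; exact: Phi_in_Linf_fs.
- by move=> g e s; apply: nearW => x; exact: (Phi_act G_group).
- move=> n e s size_e; apply: filterS ae_cov => x covx.
  exact: (bdry_Phi W_disj).
- by move=> f; apply: filterS ae_cov => x covx; exact: (aug_Phi W_disj).
Qed.
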